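(* Let $(G,\alpha)$ be an edge-labeled graph with $n$ vertices $v_1,\dots,v_n$ over $\mathbb{Z}/m\mathbb{Z}$ and let $1<i\le n$. Let $f=\big[\bigcup_{k=1}^{i-1}\{(p^{(i,k)})\}\big]$ be the least common multiple of the greatest common divisors of all $v_k$-trails of $v_i$, over $k=1,\dots,i-1$, and suppose $f\not\equiv 0\pmod m$. Then there exists an $i$-th flow-up class $\bar F^{(i)}=(\bar 0,\dots,\bar 0,\bar f^{(i)}_{v_i},\dots,\bar f^{(i)}_{v_n})\in\mathcal F_i$ (so $\bar f^{(i)}_{v_j}=\bar 0$ for all $j<i$) with $\bar f^{(i)}_{v_i}=f+m\mathbb{Z}$.
   Context: Let $m\ge 2$ and $G=(V,E)$ a finite simple connected graph with ordered vertices $v_1,\dots,v_n$. An edge-labeling $\alpha$ assigns to each edge a nonzero ideal of $\mathbb{Z}/m\mathbb{Z}$; each edge $e$ is labeled by the ideal $\alpha(e)=\langle l_e+m\mathbb{Z}\rangle$ generated by the class of a positive integer $l_e$, the integer representative (smallest positive integer of the coset) of the label. A spline on $(G,\alpha)$ is $F=(f_{v_1},\dots,f_{v_n})\in(\mathbb{Z}/m\mathbb{Z})^n$ with $f_{v_a}-f_{v_b}\in\alpha(v_av_b)$ for each edge $v_av_b$. An $i$-th flow-up class is a spline with $f_{v_i}\ne0$ and $f_{v_t}=0$ for $t<i$; $\mathcal F_i$ is the set of these. A trail is a sequence of vertices and edges, consecutive vertices joined by the listed edge, in which no edge is repeated; a $v_k$-trail of $v_i$ is a trail from $v_i$ to $v_k$.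 For such a trail $p^{(i,k)}$, $(p^{(i,k)})$ is the gcd (in $\mathbb{Z}$) of the integer representatives $l_e$ of its edges; $\{(p^{(i,k)})\}$ is the set of these over all $v_k$-trails of $v_i$; $[\,S\,]$ denotes the least common multiple of a finite set $S$ of integers. *)

From mathcomp Require Import all_boot all_order all_algebra.
From mathcomp Require Import boolp.
Set Implicit Arguments. Unset Strict Implicit. Unset Printing Implicit Defensive.
Import Order.TTheory GRing.Theory Num.Theory.

(* Vertices v_1..v_n are the ordinals 'I_n (v_{j+1} is ordinal j).
   The graph is a symmetric irreflexive relation [e]; labels are given by their
   integer representatives [l x y] (meaningful only when [e x y]). *)

Definition simple_graph n (e : rel 'I_n) :=
  symmetric e /\ irreflexive e.

Definition connected_graph n (e : rel 'I_n) :=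
  forall x y : 'I_n, connect e x y.

Definition uedge n (xy : 'I_n * 'I_n) : 'I_n * 'I_n :=
  if (xy.1 <= xy.2)%N then xy else (xy.2, xy.1).

Definition walk_edges n (x : 'I_n) (p : seq 'I_n) := zip (x :: p) p.

Definition is_trail n (e : rel 'I_n) (x y : 'I_n) (p : seq 'I_n) : bool :=
  [&& path e x p, last x p == y & uniq (map (@uedge n) (walk_edges x p))].

Definition trail_gcd n (l : 'I_n -> 'I_n -> nat) (x : 'I_n) (p : seq 'I_n) : nat :=
  foldr gcdn 0%N (map (fun xy => l xy.1 xy.2) (walk_edges x p)).

Definition trail_gcd_value n (e : rel 'I_n) (l : 'I_n -> 'I_n -> nat)
  (i : 'I_n) (d : nat) : Prop :=
  exists (k : 'I_n) (p : seq 'I_n),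
    (k < i)%N /\ is_trail e i k p /\ trail_gcd l i p = d.

(* f = lcm of the finite set above; every element is the gcd of a nonempty
   trail with labels in [1, m-1], hence lies in 'I_m, so ranging d over 'I_m
   loses nothing. *)
Definition flow_f n (m : nat) (e : rel 'I_n) (l : 'I_n -> 'I_n -> nat) (i : 'I_n) : nat :=
  \big[lcmn/1%N]_(d < m | `[< trail_gcd_value e l i d >]) d.

(* labels: nonzero ideals <l_e + mZ>, l_e the smallest positive representative *)
Definition valid_labels n (m : nat) (e : rel 'I_n) (l : 'I_n -> 'I_n -> nat) :=
  forall x y, e x y -> (0 < l x y < m)%N /\ l x y = l y x.

Open Scope ring_scope.

Definition is_spline n (m : nat) (e : rel 'I_n) (l : 'I_n -> 'I_n -> nat)
  (F : 'I_n -> 'Z_m) : Prop :=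
  forall a b, e a b -> exists c : 'Z_m, F a - F b = c * (l a b)%:R.

Definition flow_up n (m : nat) (e : rel 'I_n) (l : 'I_n -> 'I_n -> nat)
  (i : 'I_n) (F : 'I_n -> 'Z_m) : Prop :=
  is_spline e l F /\ F i != 0 /\ (forall t : 'I_n, (t < i)%N -> F t = 0).

From mathcomp Require Import all_boot all_order all_algebra.
From mathcomp Require Import boolp.
Set Implicit Arguments. Unset Strict Implicit. Unset Printing Implicit Defensive.
Import GRing.Theory.
Local Open Scope nat_scope.

(* The values at v_i of the splines vanishing on v_1, ..., v_(i-1) form an
   ideal of Z/mZ, and we show that f lies in it.  Let L = (m-1)!, a common
   multiple of all labels: f * L times the indicator of {v_i, ..., v_n} is
   such a spline.  For a prime p with p^k || f, let C be the set of vertices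
   reached from v_i along edges whose label is divisible by p^(k+1).  C avoids
   v_1, ..., v_(i-1): a shortest walk from v_i to such a vertex is a trail
   whose gcd is divisible by p^(k+1), yet divides f.  Every edge leaving C has
   a label dividing f * L_p', so f * L_p' times the indicator of C is again
   such a spline.  Since L and the L_p' have gcd 1, Bezout gives f. *)

Lemma gcdn_partn_primes N :
  0 < N -> gcdn N (\big[gcdn/0]_(p <- primes N) N`_p^') = 1.
Proof.
move=> N_gt0; set g := gcdn N _; apply/eqP.
rewrite eqn_leq gcdn_gt0 N_gt0 andbT leqNgt; apply/negP => /pdiv_prime q_pr.
set q := pdiv g in q_pr; have q_g : q %| g := pdiv_dvd g.
have q_N : q \in primes N by rewrite mem_primes q_pr N_gt0 (dvdn_trans q_g) ?dvdn_gcdl.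
have : q %| N`_q^'.
  rewrite (dvdn_trans q_g) // (dvdn_trans (dvdn_gcdr _ _)) //.
  by rewrite (bigD1_seq q) ?primes_uniq //= dvdn_gcdl.
by apply/negP; rewrite -(p'natE _ q_pr) part_pnat.
Qed.

Lemma gcd_closed_partn_1 (P : nat -> Prop) N : 0 < N ->
  (forall a b, P a -> P b -> P (gcdn a b)) ->
  P N -> (forall p, prime p -> P N`_p^') -> P 1.
Proof.
move=> N_gt0 P_gcd PN P_part; rewrite -(gcdn_partn_primes N_gt0) big_seq.
apply: (big_rec (fun x => P (gcdn N x))) => [|p x]; first by rewrite gcdn0.
by rewrite mem_primes gcdnCA => /andP[p_pr _] /(P_gcd _ _ (P_part p p_pr)).
Qed.

Lemma path_zipE (T : Type) (r : rel T) x p :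
  path r x p = all (fun xy => r xy.1 xy.2) (zip (x :: p) p).
Proof. by elim: p x => //= y p IH x; rewrite IH. Qed.

Lemma mem_zip (S T : eqType) (s : seq S) (t : seq T) xy :
  xy \in zip s t -> (xy.1 \in s) && (xy.2 \in t).
Proof.
elim: s t => [|x s IH] [|y t] //=.
by rewrite !inE => /predU1P[-> | /IH/andP[-> ->]]; rewrite ?eqxx ?orbT.
Qed.

Lemma mem_uedge n (xy : 'I_n * 'I_n) :
  xy.1 \in [:: (uedge xy).1; (uedge xy).2].
Proof. by rewrite /uedge; case: ifP; rewrite !inE eqxx ?orbT. Qed.

Lemma uniq_walk_edges n (x : 'I_n) p :
  uniq (x :: p) -> uniq (map (@uedge n) (walk_edges x p)).
Proof.
elim: p x => [|y p IH] x //= /andP[x_yp uniq_yp]; rewrite IH // andbT.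
apply/mapP => -[[a b] /mem_zip/andP[a_yp b_p] same_edge].
have b_yp : b \in y :: p by rewrite inE b_p orbT.
move: (mem_uedge (x, y)); rewrite same_edge /uedge /=.
by case: ifP => _; rewrite !inE => /orP[] /eqP x_ab; rewrite x_ab ?a_yp ?b_yp in x_yp.
Qed.

Lemma dvdn_trail_gcd n (l : 'I_n -> 'I_n -> nat) x p d :
  {in walk_edges x p, forall xy, d %| l xy.1 xy.2} -> d %| trail_gcd l x p.
Proof.
rewrite /trail_gcd; elim: (walk_edges x p) => [|xy s IH] d_s //=.
rewrite dvdn_gcd d_s ?mem_head // IH // => z z_s.
by rewrite d_s // inE z_s orbT.
Qed.

Local Open Scope ring_scope.

Section Splines.

Variables (m n : nat) (e : rel 'I_n) (l : 'I_n -> 'I_n -> nat) (i : 'I_n).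

Definition flow_value (z : 'Z_m) : Prop :=
  exists F : 'I_n -> 'Z_m,
    [/\ is_spline e l F, forall t : 'I_n, (t < i)%N -> F t = 0 & F i = z].

Lemma flow_value_lincomb c1 c2 z1 z2 :
  flow_value z1 -> flow_value z2 -> flow_value (c1 * z1 + c2 * z2).
Proof.
move=> [F1 [spline1 low1 <-]] [F2 [spline2 low2 <-]].
exists (fun t => c1 * F1 t + c2 * F2 t); split => // [a b e_ab | t t_lt_i].
  have [k1 eq1] := spline1 a b e_ab; have [k2 eq2] := spline2 a b e_ab.
  exists (c1 * k1 + c2 * k2).
  by rewrite opprD addrACA -!mulrBr eq1 eq2 mulrDl !mulrA.
by rewrite low1 // low2 // !mulr0 addr0.
Qed.

Lemma flow_value_gcdn c a b :
  flow_value (c * a)%:R -> flow_value (c * b)%:R ->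
  flow_value (c * gcdn a b)%:R.
Proof.
have [u [v Bezout]] := Bezoutz a b.
have -> : (c * gcdn a b)%:R = u%:~R * (c * a)%:R + v%:~R * (c * b)%:R :> 'Z_m.
  rewrite !natrM !mulrA -!(mulrC c%:R) -!mulrA -mulrDr; congr (_ * _).
  by rewrite -[(gcdn a b)%:R]/((gcdz a b)%:~R) -Bezout intrD !intrM.
exact: flow_value_lincomb.
Qed.

Lemma flow_value_indicator (C : pred 'I_n) c :
  C i -> (forall t : 'I_n, (t < i)%N -> ~~ C t) ->
  (forall a b, e a b -> C a != C b -> l a b %| c)%N ->
  flow_value c%:R.
Proof.
move=> C_i C_low C_cut; exists (fun t => if C t then c%:R else 0).
split=> [a b e_ab | t /C_low/negbTE-> // | ]; last by rewrite C_i.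
have [C_ab | /(C_cut a b e_ab)/dvdnP[q ->]] := eqVneq (C a) (C b).
  by exists 0; rewrite C_ab subrr mul0r.
by case: (C a) (C b) => -[]; [exists 0 | exists q%:R | exists (- q%:R) | exists 0];
  rewrite ?subrr ?subr0 ?sub0r ?mul0r ?natrM ?mulNr.
Qed.

Hypothesis labels : valid_labels m e l.

Lemma trail_gcd_dvdn_flow_f (k y : 'I_n) (p : seq 'I_n) :
  (k < i)%N -> is_trail e i k (y :: p) -> (trail_gcd l i (y :: p) %| flow_f m e l i)%N.
Proof.
move=> k_lt_i trail; have /and3P[/= /andP[e_iy _] _ _] := trail.
have [/andP[l_gt0 l_lt_m] _] := labels e_iy.
have d_lt_m : (trail_gcd l i (y :: p) < m)%N.
  exact: leq_ltn_trans (dvdn_leq l_gt0 (dvdn_gcdl _ _)) l_lt_m.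
rewrite /flow_f (bigD1 (Ordinal d_lt_m)) /= ?dvdn_lcml //.
by apply/asboolP; exists k, (y :: p).
Qed.

Hypotheses (m_gt1 : (1 < m)%N) (e_sym : symmetric e).

Let f := flow_f m e l i.
Let L := (m.-1)`!.

Hypothesis f_gt0 : (0 < f)%N.

Lemma label_dvdn_fact a b : e a b -> (l a b %| L)%N.
Proof.
move=> /labels[/andP[l_gt0 l_lt_m] _]; rewrite dvdn_fact // l_gt0.
by rewrite -ltnS prednK // (ltn_trans _ m_gt1).
Qed.

Lemma flow_value_fact : flow_value (f * L)%:R.
Proof.
apply: (flow_value_indicator (C := [pred t : 'I_n | i <= t]%N)) => //=.
  by move=> t; rewrite -ltnNge.
by move=> a b /label_dvdn_fact l_L _; rewrite dvdn_mull.
Qed.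

Section PrimeCut.

Variables (p : nat) (p_pr : prime p).

Let e_p := [rel x y | e x y && (p ^ (logn p f).+1 %| l x y)%N].

Lemma connect_divisible_labels_ge t : connect e_p i t -> (i <= t)%N.
Proof.
case/connectP=> q e_p_q ->; rewrite leqNgt; apply/negP.
case/shortenP: e_p_q => [[|y q'] e_p_q' uniq_q' _ /=]; first by rewrite ltnn.
move=> last_lt_i; set d := trail_gcd l i (y :: q').
have trail : is_trail e i (last y q') (y :: q').
  by rewrite /is_trail (sub_path _ e_p_q') ?uniq_walk_edges ?eqxx // => a b /andP[].
have /dvdn_trans/(_ (trail_gcd_dvdn_flow_f last_lt_i trail)) : (p ^ (logn p f).+1 %| d)%N.
  apply: dvdn_trail_gcd => xy xy_in.
  by move: e_p_q'; rewrite path_zipE => /allP/(_ xy xy_in)/andP[].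
by rewrite pfactor_dvdn // ltnn.
Qed.

Lemma flow_value_partn : flow_value (f * L`_p^')%:R.
Proof.
apply: (flow_value_indicator (C := connect e_p i)) => [|t t_lt_i|a b e_ab C_ab].
- exact: connect0.
- by apply/negP => /connect_divisible_labels_ge; rewrite leqNgt t_lt_i.
wlog [C_a C_b] : a b e_ab {C_ab} / connect e_p i a /\ ~~ connect e_p i b.
  move=> cut; move: C_ab.
  case: (boolP (connect e_p i a)) => C_a; case: (boolP (connect e_p i b)) => C_b // _.
    exact: cut.
  by have [_ ->] := labels e_ab; apply: cut => //; rewrite e_sym.
have not_p_l : ~~ (p ^ (logn p f).+1 %| l a b)%N.
  apply: contra C_b => p_l; apply: connect_trans C_a (connect1 _).
  by rewrite /= e_ab.
have [/andP[l_gt0 _] _] := labels e_ab.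
rewrite -(partnC p l_gt0) dvdn_mul ?partn_dvd ?label_dvdn_fact ?fact_gt0 //.
rewrite p_part (dvdn_trans _ (pfactor_dvdnn p f)) // dvdn_exp2l //.
by rewrite leqNgt -pfactor_dvdn.
Qed.

End PrimeCut.

End Splines.

Theorem mainTheorem3 (m n : nat) (e : rel 'I_n) (l : 'I_n -> 'I_n -> nat)
  (i : 'I_n) :
  (1 < m)%N ->
  simple_graph e -> connected_graph e -> valid_labels m e l ->
  (0 < i)%N ->
  (flow_f m e l i %% m != 0)%N ->
  exists F : 'I_n -> 'Z_m,
    flow_up e l i F /\ F i = (flow_f m e l i)%:R.
Proof.
move=> m_gt1 [e_sym _] _ labels _ f_mod_m.
set f := flow_f m e l i in f_mod_m *.
have f_gt0 : (0 < f)%N by rewrite lt0n; apply: contra_neq f_mod_m => ->; rewrite mod0n.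
pose P x := flow_value e l i ((f * x)%:R : 'Z_m).
have : P 1%N.
  apply: (gcd_closed_partn_1 (fact_gt0 m.-1)).
  - exact: flow_value_gcdn.
  - exact: flow_value_fact.
  - exact: flow_value_partn.
rewrite /P muln1 => -[F [spline low F_i]]; exists F; split=> //; split=> //.
by rewrite F_i -val_eqE /= val_Zp_nat.
Qed.
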